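(* Let $G^c$ be a vertex-coloured graph with $n$ vertices, $m$ edges and $c$ colours, and let $k>0$ be an integer. If $m\ge \binom{n-k+c-1}{2}+n-k$ and $n>k+c-2$, then $\gamma^t(G^c)\le k$. Furthermore (for $k\ge c$), there exist vertex-coloured graphs with $n$ vertices, $c$ colours, exactly $\binom{n-k+c-1}{2}+n-k$ edges and $\gamma^t=k$.
   Context: A vertex-coloured graph $G^c$ with colour set $\{1,\dots,c\}$ is a finite simple graph in which every vertex receives exactly one colour and every colour appears on at least one vertex. A dominating set is tropical if every colour appears on at least one of its vertices; $\gamma^t(G^c)$ is the minimum size of a tropical dominating set. *)

From mathcomp Require Import all_boot.
Set Implicit Arguments. Unset Strict Implicit. Unset Printing Implicit Defensive.

Definition simple_graph (n : nat) (e : rel 'I_n) : Prop :=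
  (forall u v, e u v = e v u) /\ (forall v, ~~ e v v).

Definition colouring_onto (n c : nat) (col : 'I_n -> 'I_c) : Prop :=
  forall i : 'I_c, exists v : 'I_n, col v = i.

Definition num_edges (n : nat) (e : rel 'I_n) : nat :=
  #|[set p : 'I_n * 'I_n | (p.1 < p.2)%N && e p.1 p.2]|.

Definition dominating (n : nat) (e : rel 'I_n) (D : {set 'I_n}) : bool :=
  [forall v, (v \in D) || [exists u in D, e u v]].

Definition tropical (n c : nat) (col : 'I_n -> 'I_c) (D : {set 'I_n}) : bool :=
  [forall i : 'I_c, [exists v in D, col v == i]].

Definition tropical_dominating (n c : nat) (e : rel 'I_n) (col : 'I_n -> 'I_c)
  (D : {set 'I_n}) : bool := dominating e D && tropical col D.

(* Tropical domination number: minimum size of a tropical dominating set.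
   (The whole vertex set is one when the colouring is onto, so the
   default value n is never the result of an empty minimum.) *)
Definition gamma_t (n c : nat) (e : rel 'I_n) (col : 'I_n -> 'I_c) : nat :=
  \big[minn/n]_(D : {set 'I_n} | tropical_dominating e col D) #|D|.

From mathcomp Require Import all_boot zify.
Set Implicit Arguments. Unset Strict Implicit. Unset Printing Implicit Defensive.

(* Suppose every vertex set X has fewer than r := n - k + c - 1 outside neighbours.
   Let u be a vertex of maximum degree d, with neighbourhood A. For w in A, both A \ w
   and the neighbours of w beyond u |: A lie outside {u, w}, so there are at most r - d
   of the latter; and adding u to a set X avoiding u |: A puts all of A outside X.
   Induction on the graph without u |: A then bounds the degree sum, twice the number
   of edges, by (r - 1)(r + 1), contradicting the edge count. So some X has at least
   r outside neighbours; their complement is a dominating set with at most k - c + 1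
   vertices, and one extra vertex for each of the at most c - 1 missing colours makes
   it tropical. *)

Lemma sum_nat_boolE (T : finType) (S : {set T}) (P : pred T) :
  \sum_(w in S) (P w : nat) = #|[set w in S | P w]|.
Proof.
rewrite -sum1_card [RHS]big_mkcond [LHS]big_mkcond.
by apply: eq_bigr => w _; rewrite inE; case: (w \in S); case: (P w).
Qed.

Lemma cardsU_disjoint (T : finType) (A B : {set T}) :
  [disjoint A & B] -> #|A :|: B| = #|A| + #|B|.
Proof. by move=> AB; apply/eqP; rewrite (eq_leqif (leq_card_setU A B)). Qed.

Section OuterNeighbourhood.
Variables (V : finType) (e : rel V).
Hypotheses (e_sym : symmetric e) (e_irr : irreflexive e).

Definition deg (S : {set V}) v := \sum_(w in S) (e v w : nat).
Definition nbhd (S : {set V}) v := [set w in S | e v w].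
Definition outer (S X : {set V}) := [set y in S :\: X | [exists x in X, e x y]].
Definition rest (S : {set V}) u := S :\: (u |: nbhd S u).

Lemma deg_card (S : {set V}) v : deg S v = #|nbhd S v|.
Proof. exact: sum_nat_boolE. Qed.

Lemma nbhd_sub (S : {set V}) v : nbhd S v \subset S.
Proof. by apply/subsetP => w; rewrite inE => /andP[]. Qed.

Lemma notin_nbhd (S : {set V}) v : v \notin nbhd S v.
Proof. by rewrite inE e_irr andbF. Qed.

Lemma rest_nadj (S : {set V}) u v : v \in rest S u -> e u v = false.
Proof. by rewrite !inE => /andP[/norP[_]] /[swap] vS; rewrite vS => /negbTE. Qed.

Section RemoveClosedNeighbourhood.
Variables (S : {set V}) (T : nat) (u : V).
Hypotheses (outer_le : forall X : {set V}, X \subset S -> #|outer S X| <= T)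
           (uS : u \in S).

Lemma card_nbhd_le : #|nbhd S u| <= T.
Proof.
apply: leq_trans (@outer_le [set u] _); last by rewrite sub1set.
apply/subset_leq_card/subsetP => w; rewrite !inE => /andP[wS euw].
rewrite wS andbT; apply/andP; split; first by apply: contraTneq euw => ->; rewrite e_irr.
by apply/existsP; exists u; rewrite inE eqxx.
Qed.

Lemma card_nbhd_rest_le w :
  w \in nbhd S u -> #|nbhd (rest S u) w| + #|nbhd S u| <= T + 1.
Proof.
move=> wA; have wS := subsetP (nbhd_sub S u) w wA.
have sub : (nbhd S u :\ w) :|: nbhd (rest S u) w \subset outer S [set u; w].
  apply/subsetP => y; rewrite !inE.
  case/orP => [/andP[ynw /andP[yS euy]]|/andP[/andP[/norP[ynu ynA] yS] ewy]].
    rewrite yS (negbTE ynw) orbF andbT; apply/andP; split.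
      by apply: contraTneq euy => ->; rewrite e_irr.
    by apply/existsP; exists u; rewrite !inE eqxx.
  rewrite yS (negbTE ynu) andbT /=; apply/andP; split.
    by apply: contraNneq ynA => ->; rewrite wS; move: wA; rewrite inE => /andP[].
  by apply/existsP; exists w; rewrite !inE eqxx orbT.
have disj : [disjoint nbhd S u :\ w & nbhd (rest S u) w].
  rewrite disjoints_subset; apply/subsetP => y.
  by rewrite !inE => /andP[_ /andP[-> ->]]; rewrite orbT.
have uwS : [set u; w] \subset S by rewrite subUset !sub1set uS wS.
have := leq_trans (subset_leq_card sub) (outer_le uwS).
rewrite cardsU_disjoint // (cardsD1 w (nbhd S u)) wA; lia.
Qed.

Lemma outer_rest_le (Y : {set V}) :
  Y \subset rest S u -> #|outer (rest S u) Y| + #|nbhd S u| <= T.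
Proof.
move=> YB; have BS : rest S u \subset S by apply: subsetDl.
have sub : nbhd S u :|: outer (rest S u) Y \subset outer S (u |: Y).
  apply/subsetP => y; rewrite !inE.
  case/orP => [/andP[yS euy]|/andP[/andP[yY yB] /existsP[x /andP[xY exy]]]].
    rewrite yS andbT; apply/andP; split.
      apply/norP; split; first by apply: contraTneq euy => ->; rewrite e_irr.
      by apply: contraTN euy => /(subsetP YB)/rest_nadj ->.
    by apply/existsP; exists u; rewrite !inE eqxx.
  have [/norP[ynu _] yS] := andP yB.
  rewrite yS (negbTE yY) (negbTE ynu) /=.
  by apply/existsP; exists x; rewrite !inE xY orbT.
have disj : [disjoint nbhd S u & outer (rest S u) Y].
  rewrite disjoints_subset; apply/subsetP => y.
  by rewrite !inE => /andP[-> ->]; rewrite orbT /= andbF.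
have uYS : u |: Y \subset S by rewrite subUset sub1set uS (subset_trans YB BS).
have := leq_trans (subset_leq_card sub) (outer_le uYS).
by rewrite cardsU_disjoint // addnC.
Qed.

End RemoveClosedNeighbourhood.

Lemma sum_deg_split (S : {set V}) u : u \in S ->
  \sum_(v in S) deg S v =
    deg S u + \sum_(v in nbhd S u) deg S v
    + (\sum_(w in nbhd S u) deg (rest S u) w + \sum_(v in rest S u) deg (rest S u) v).
Proof.
move=> uS; set A := nbhd S u; set B := rest S u.
have AS : u |: A \subset S by rewrite subUset sub1set uS nbhd_sub.
have splitS F : \sum_(v in S) F v = \sum_(v in u |: A) F v + \sum_(v in B) F v :> nat.
  by rewrite (big_setID (u |: A)) (setIidPr AS).
rewrite splitS big_setU1 ?notin_nbhd //=; congr (_ + _).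
rewrite {1}/deg; under eq_bigr do rewrite splitS big_setU1 ?notin_nbhd //=.
rewrite !big_split /= [X in X + _ + _]big1 => [|v /rest_nadj]; last by rewrite e_sym => ->.
rewrite add0n exchange_big /=; congr (_ + _).
by apply: eq_bigr => w _; apply: eq_bigr => v _; rewrite e_sym.
Qed.

Lemma sum_deg_outer_bound (S : {set V}) T :
  (forall X : {set V}, X \subset S -> #|outer S X| <= T) ->
  \sum_(v in S) deg S v <= T * (T + 2).
Proof.
elim: {S}_.+1 {-2}S (ltnSn #|S|) T => [|N IH] S // cardS T outer_le.
have [->|[u0 u0S]] := set_0Vmem S; first by rewrite big_set0.
have [u uS umax] := @arg_maxnP _ u0 (mem S) (deg S) u0S.
have degA := card_nbhd_le outer_le uS.
have IHrest : \sum_(v in rest S u) deg (rest S u) v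
              <= (T - #|nbhd S u|) * (T - #|nbhd S u| + 2).
  apply: IH => [|Y YB]; last by have := outer_rest_le outer_le uS YB; lia.
  rewrite -ltnS; apply: leq_trans cardS; apply/proper_card/properP; split.
    exact: subsetDl.
  by exists u => //; rewrite !inE eqxx.
have sumA : \sum_(v in nbhd S u) deg S v <= #|nbhd S u| * #|nbhd S u|.
  rewrite -sum_nat_const -deg_card; apply: leq_sum => v vA.
  exact/umax/(subsetP (nbhd_sub S u)).
have sumAB : \sum_(w in nbhd S u) deg (rest S u) w
              <= #|nbhd S u| * (T + 1 - #|nbhd S u|).
  rewrite -sum_nat_const; apply: leq_sum => w wA.
  by have := card_nbhd_rest_le outer_le uS wA; rewrite deg_card; lia.
rewrite (sum_deg_split uS) deg_card.
move: sumA sumAB IHrest degA; move: (\sum_(v in _) _) (\sum_(w in _) _) (\sum_(v in _) _).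
move: #|nbhd S u| => d a b c; nia.
Qed.

End OuterNeighbourhood.

Lemma simple_graphP n (e : rel 'I_n) :
  simple_graph e -> symmetric e /\ irreflexive e.
Proof. by case=> sym irr; split=> [//|v]; apply/negbTE. Qed.

Lemma sum_deg_num_edges n (e : rel 'I_n) : simple_graph e ->
  \sum_(v in [set: 'I_n]) deg e [set: 'I_n] v = 2 * num_edges e.
Proof.
case/simple_graphP=> sym irr; rewrite /num_edges /deg.
have sumT (I : finType) (F : I -> nat) : \sum_(i in [set: I]) F i = \sum_i F i.
  by apply: eq_bigl => i; rewrite in_setT.
rewrite sumT; under eq_bigr do rewrite sumT.
have -> : [set p : 'I_n * 'I_n | (p.1 < p.2) && e p.1 p.2] =
          [set p in [set: 'I_n * 'I_n] | (p.1 < p.2) && e p.1 p.2].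
  by apply/setP => p; rewrite !inE.
rewrite -sum_nat_boolE sumT.
rewrite -(pair_bigA _ (fun i j : 'I_n => ((i < j) && e i j : nat))) /=.
have -> : \sum_(i : 'I_n) \sum_(j : 'I_n) (e i j : nat) =
    \sum_(i : 'I_n) \sum_(j : 'I_n) ((i < j) && e i j : nat)
    + \sum_(i : 'I_n) \sum_(j : 'I_n) ((j < i) && e i j : nat).
  rewrite -big_split; apply: eq_bigr => i _; rewrite -big_split; apply: eq_bigr => j _ /=.
  by case: (ltngtP i j) => [||/val_inj ->] /=; rewrite ?addn0 ?irr.
rewrite [X in _ + X]exchange_big /=.
under [X in _ + X]eq_bigr do under eq_bigr do rewrite sym.
by rewrite addnn -mul2n.
Qed.

Lemma num_edges_outer_bound n (e : rel 'I_n) T : simple_graph e ->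
  (forall X, #|outer e [set: 'I_n] X| <= T) -> 2 * num_edges e <= T * (T + 2).
Proof.
move=> e_simple outer_le; have [sym irr] := simple_graphP e_simple.
by rewrite -sum_deg_num_edges //; apply: sum_deg_outer_bound.
Qed.

Section Domination.
Variables (n c : nat) (e : rel 'I_n) (col : 'I_n -> 'I_c).

Lemma dominatingS (D1 D2 : {set 'I_n}) :
  D1 \subset D2 -> dominating e D1 -> dominating e D2.
Proof.
move=> /subsetP D12 /forallP dom1; apply/forallP => v.
case/orP: (dom1 v) => [/D12 -> //|/existsP[u /andP[/D12 uD2 euv]]].
by apply/orP; right; apply/existsP; exists u; rewrite uD2.
Qed.

Lemma dominating_setC_outer (X : {set 'I_n}) : dominating e (~: outer e [set: 'I_n] X).
Proof.
apply/forallP => v; rewrite inE; case: (boolP (v \in _)) => //=.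
rewrite !inE => /andP[/andP[vX _] /existsP[x /andP[xX exv]]].
by apply/existsP; exists x; rewrite !inE xX.
Qed.

Lemma dominating_neq0 (D : {set 'I_n}) : 0 < n -> dominating e D -> D != set0.
Proof.
move=> n_gt0 /forallP/(_ (Ordinal n_gt0)) /orP[v0D|/existsP[u /andP[uD _]]].
  by apply/set0Pn; exists (Ordinal n_gt0).
by apply/set0Pn; exists u.
Qed.

(* One vertex is added for each colour missing from [D0]; at most [c - 1] colours
   are missing since [D0] is nonempty. *)
Lemma tropical_extension (D0 : {set 'I_n}) : colouring_onto col -> D0 != set0 ->
  exists2 D : {set 'I_n}, D0 \subset D & tropical col D && (#|D| <= #|D0| + c.-1).
Proof.
move=> onto /set0Pn[v0 v0D].
pose rep i := odflt v0 [pick v | col v == i].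
have col_rep i : col (rep i) = i.
  rewrite /rep; case: pickP => [v /eqP //|none].
  by have [v colv] := onto i; move: (none v); rewrite colv eqxx.
pose missing := [set i | [forall v in D0, col v != i]].
exists (D0 :|: rep @: missing); first exact: subsetUl.
apply/andP; split.
  apply/forallP => i; apply/existsP; case: (boolP (i \in missing)) => [im|].
    by exists (rep i); rewrite col_rep eqxx inE imset_f ?orbT.
  rewrite inE negb_forall => /existsP[v]; rewrite negb_imply negbK => /andP[vD /eqP <-].
  by exists v; rewrite inE vD eqxx.
have : missing \subset [set~ col v0].
  apply/subsetP => i; rewrite !inE => /forallP/(_ v0); rewrite v0D.
  by apply: contra => /eqP <-.
move/subset_leq_card; rewrite cardsC1 card_ord => card_missing.
apply: leq_trans (leq_card_setU _ _) _.
by rewrite leq_add2l (leq_trans (leq_imset_card _ _)).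
Qed.

(* [minn] with unit [n] is not a monoid law, so [bigD1] is unavailable. *)
Lemma gamma_t_le (D : {set 'I_n}) :
  tropical_dominating e col D -> gamma_t e col <= #|D|.
Proof.
move=> DP; rewrite /gamma_t; have : D \in index_enum {set 'I_n} by rewrite mem_index_enum.
elim: (index_enum _) => [//|D' s IH]; rewrite inE big_cons.
case/orP => [/eqP <-|/IH Ds]; first by rewrite DP geq_minl.
by case: ifP => // _; rewrite geq_min Ds orbT.
Qed.

Lemma gamma_t_ge k : k <= n ->
  (forall D : {set 'I_n}, tropical_dominating e col D -> k <= #|D|) -> k <= gamma_t e col.
Proof.
move=> k_le_n k_le; rewrite /gamma_t; elim/big_ind: _ => // x y.
by rewrite leq_min => -> ->.
Qed.

End Domination.

Lemma bin2_double r : 'C(r, 2) * 2 = r * r.-1.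
Proof. by rewrite bin_ffact ffactnS ffactn1. Qed.

Lemma gamma_t_le_of_num_edges (n c k : nat) (e : rel 'I_n) (col : 'I_n -> 'I_c) :
  simple_graph e -> colouring_onto col -> 0 < c -> 0 < k -> k + c < n + 2 ->
  'C(n - k + c - 1, 2) + (n - k) <= num_edges e -> gamma_t e col <= k.
Proof.
move=> e_simple onto c_gt0 k_gt0 kcn edges_ge.
set r := n - k + c - 1 in edges_ge.
have [X rX] : exists X : {set 'I_n}, r <= #|outer e [set: 'I_n] X|.
  apply/existsP; apply: contraT => /existsPn outer_lt.
  have outer_le X : #|outer e [set: 'I_n] X| <= r.-1.
    by have := outer_lt X; rewrite -ltnNge; lia.
  have r_gt0 : 0 < r by have := outer_lt set0; rewrite -ltnNge; lia.
  have := num_edges_outer_bound e_simple outer_le.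
  have := bin2_double r; move: r_gt0 edges_ge; rewrite /r.
  move: ('C(_, 2)) (num_edges e) => C m; nia.
have dom := dominating_setC_outer e X.
set O := outer e [set: 'I_n] X in rX dom.
have n_gt0 : 0 < n by lia.
have [D D0D /andP[trop cardD]] := tropical_extension onto (dominating_neq0 n_gt0 dom).
apply: leq_trans (gamma_t_le (_ : tropical_dominating e col D)) _.
  by rewrite /tropical_dominating trop (dominatingS D0D dom).
have O_le_n : #|O| <= n by rewrite -[n in _ <= n]card_ord max_card.
have cardC : #|~: O| = n - #|O| by rewrite cardsCs setCK card_ord.
rewrite cardC in cardD; rewrite /r in rX; lia.
Qed.

Lemma card_ord_pred n (P : pred nat) : #|[set i : 'I_n | P i]| = count P (iota 0 n).
Proof. by rewrite cardsE cardE /enum_mem -val_enum_ord count_map size_filter enumT. Qed.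

Lemma count_iota_piecewise n a b (P : pred nat) (v1 v2 v3 : bool) : a <= b <= n ->
  (forall i, i < a -> P i = v1) -> (forall i, a <= i < b -> P i = v2) ->
  (forall i, b <= i < n -> P i = v3) ->
  count P (iota 0 n) = v1 * a + v2 * (b - a) + v3 * (n - b).
Proof.
move=> /andP[ab bn] P1 P2 P3.
have const m l (v : bool) : (forall i, m <= i < m + l -> P i = v) -> count P (iota m l) = v * l.
  move=> Pv; rewrite (@eq_in_count _ _ (fun=> v)) => [|i]; last by rewrite mem_iota => /Pv.
  by case: v {Pv}; rewrite ?count_predT ?count_pred0 ?size_iota ?mul1n.
have {1}-> : n = a + (b - a) + (n - b) by lia.
rewrite !iotaD !count_cat add0n (subnKC ab).
rewrite (const 0 a v1) ?(const a (b - a) v2) ?(const b (n - b) v3) // => i Hi;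
  first [apply: P1 | apply: P2 | apply: P3]; lia.
Qed.

Lemma card_ord_pairs n (Q : nat -> nat -> bool) :
  #|[set p : 'I_n * 'I_n | Q p.1 p.2]| = \sum_(j < n) #|[set i : 'I_n | Q i j]|.
Proof.
have indicator (I : finType) (P : pred I) : #|[set i | P i]| = \sum_i (P i : nat).
  by rewrite -sum1_card big_mkcond; apply: eq_bigr => i _; rewrite inE; case: (P i).
rewrite indicator -(pair_bigA _ (fun i j : 'I_n => (Q i j : nat))) exchange_big /=.
by apply: eq_bigr => j _; rewrite indicator.
Qed.

(* The extremal graph: a clique on [0, r), the vertex r joined to [c', r), and
   isolated vertices above r; the vertices of [0, c') carry the private colours
   1, ..., c' and every other vertex has colour 0. *)
Definition extremal_adj (r c' : nat) : rel nat := fun i j =>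
  (i != j) && ((maxn i j < r) || (maxn i j == r) && (c' <= minn i j)).

Section Extremal.
Variables (n r c' : nat).
Hypotheses (c'_le_r : c' <= r) (r_lt_n : r < n).

Definition extremal_graph : rel 'I_n := fun i j => extremal_adj r c' i j.
Definition extremal_colouring (i : 'I_n) : 'I_c'.+1 :=
  inord (if i < c' then i.+1 else 0).

Lemma extremal_graph_simple : simple_graph extremal_graph.
Proof.
by split=> [i j|i]; rewrite /extremal_graph /extremal_adj ?eqxx // maxnC minnC eq_sym.
Qed.

Lemma extremal_colouring_onto : colouring_onto extremal_colouring.
Proof.
move=> i; have i_lt := ltn_ord i.
have [i0|i_gt0] := posnP i.
  exists (Ordinal r_lt_n); apply: val_inj; rewrite /extremal_colouring /= ltnNge c'_le_r.
  by rewrite inordK // i0.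
have i1_lt : i.-1 < n by lia.
exists (Ordinal i1_lt); apply: val_inj; rewrite /extremal_colouring /=.
have -> : i.-1 < c' by lia.
by rewrite inordK; lia.
Qed.

Lemma num_edges_extremal : num_edges extremal_graph = 'C(r, 2) + (r - c').
Proof.
rewrite /num_edges (@card_ord_pairs n (fun i j => (i < j) && extremal_adj r c' i j)).
have col_count j : j < n -> #|[set i : 'I_n | (i < j) && extremal_adj r c' i j]| =
    if j < r then j else if j == r then r - c' else 0.
  move=> j_lt; rewrite (@card_ord_pred n (fun i => (i < j) && extremal_adj r c' i j)).
  rewrite /extremal_adj.
  case: (ltngtP j r) => jr.
  - by rewrite (@count_iota_piecewise n j j _ true false false); lia.
  - by rewrite (@count_iota_piecewise n 0 0 _ false false false); lia.
  - by rewrite (@count_iota_piecewise n c' r _ false true false); lia.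
under eq_bigr => j _ do rewrite col_count //.
rewrite -(big_mkord xpredT (fun j => if j < r then j else if j == r then r - c' else 0)).
rewrite (@big_cat_nat _ _ _ r 0 n _ _ (leq0n r) (ltnW r_lt_n)).
rewrite [\sum_(r <= i < n) _]big_ltn //= ltnn eqxx.
rewrite (@eq_big_nat _ _ _ 0 r _ id) => [|j /andP[_ ->] //].
rewrite bin2_sum big_nat_cond big1 ?addn0 // => j /andP[/andP[rj _] _].
by rewrite ltnNge ltnW //= gtn_eqF.
Qed.

Lemma extremal_colouringE (i : 'I_n) :
  nat_of_ord (extremal_colouring i) = if i < c' then i.+1 else 0.
Proof. by rewrite inordK //; case: ifP => //; lia. Qed.

Lemma extremal_tropical_dominating :
  tropical_dominating extremal_graph extremal_colouring
    [set i : 'I_n | (i < c') || (r <= i)].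
Proof.
apply/andP; split.
  apply/forallP => v; rewrite inE; case: (boolP ((v < c') || (r <= v))) => //= v_mid.
  apply/existsP; exists (Ordinal r_lt_n); rewrite inE leqnn orbT /=.
  by rewrite /extremal_graph /extremal_adj /=; lia.
apply/forallP => i; apply/existsP; have i_lt := ltn_ord i.
have [i0|i_gt0] := posnP i.
  exists (Ordinal r_lt_n); rewrite inE leqnn orbT /=.
  by apply/eqP/val_inj => /=; rewrite extremal_colouringE ltnNge c'_le_r i0.
have i1_lt : i.-1 < n by lia.
exists (Ordinal i1_lt); rewrite inE /=; apply/andP; split; first by lia.
by apply/eqP/val_inj => /=; rewrite extremal_colouringE /=; case: ifP; lia.
Qed.

(* A tropical dominating set contains the vertices with a private colour, the
   isolated vertices, and a vertex dominating r, which is none of these. *)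
Lemma extremal_card_ge (D : {set 'I_n}) :
  tropical_dominating extremal_graph extremal_colouring D -> c' + (n - r) <= #|D|.
Proof.
case/andP=> /forallP dom /forallP trop.
pose L := [set i : 'I_n | (i < c') || (r < i)].
have LD : L \subset D.
  apply/subsetP => i; rewrite inE => /orP[i_lt|r_lt].
    have /existsP[v /andP[vD /eqP colv]] := trop (inord i.+1).
    suff -> : i = v by [].
    apply: val_inj; move/(congr1 (@nat_of_ord _)): colv.
    have i1_lt : i.+1 < c'.+1 by lia.
    by rewrite extremal_colouringE (inordK i1_lt) /=; case: ifP; lia.
  case/orP: (dom i) => // /existsP[u /andP[_]].
  by rewrite /extremal_graph /extremal_adj; lia.
have [y yD yL] : exists2 y, y \in D & y \notin L.
  case/orP: (dom (Ordinal r_lt_n)) => [rD|/existsP[u /andP[uD adj]]].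
    by exists (Ordinal r_lt_n); rewrite // inE /= ltnn orbF ltnNge c'_le_r.
  by exists u; rewrite // inE; move: adj; rewrite /extremal_graph /extremal_adj /=; lia.
have yLD : y |: L \subset D by rewrite subUset sub1set yD LD.
apply: leq_trans (subset_leq_card yLD).
rewrite cardsU1 yL (@card_ord_pred n (fun i => (i < c') || (r < i))).
by rewrite (@count_iota_piecewise n c' r.+1 _ true false true); lia.
Qed.

Lemma gamma_t_extremal : gamma_t extremal_graph extremal_colouring = c' + (n - r).
Proof.
apply/eqP; rewrite eqn_leq gamma_t_ge ?andbT; [|lia|exact: extremal_card_ge].
apply: leq_trans (gamma_t_le extremal_tropical_dominating) _.
rewrite (@card_ord_pred n (fun i => (i < c') || (r <= i))).
by rewrite (@count_iota_piecewise n c' r _ true false true); lia.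
Qed.

End Extremal.

Theorem mainTheorem3 :
  (forall (n c k : nat) (e : rel 'I_n) (col : 'I_n -> 'I_c),
     simple_graph e -> colouring_onto col ->
     0 < c -> 0 < k ->
     k + c < n + 2 ->
     'C(n - k + c - 1, 2) + (n - k) <= num_edges e ->
     gamma_t e col <= k)
  /\
  (forall (n c k : nat),
     0 < c -> 0 < k -> c <= k ->
     k + c < n + 2 ->
     exists (e : rel 'I_n) (col : 'I_n -> 'I_c),
       [/\ simple_graph e, colouring_onto col,
           num_edges e = 'C(n - k + c - 1, 2) + (n - k)
         & gamma_t e col = k]).
Proof.
split; first exact: gamma_t_le_of_num_edges.
move=> n [//|c'] k _ k_gt0 c_le_k kcn.
have -> : n - k + c'.+1 - 1 = n - k + c' by lia.
have c'_le_r : c' <= n - k + c' by lia.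
have r_lt_n : n - k + c' < n by lia.
exists (@extremal_graph n (n - k + c') c'), (@extremal_colouring n c'); split.
- exact: extremal_graph_simple.
- exact: extremal_colouring_onto c'_le_r r_lt_n.
- by rewrite (num_edges_extremal c'_le_r r_lt_n) addnK.
- by rewrite (gamma_t_extremal c'_le_r r_lt_n); lia.
Qed.
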